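(* Let $X$ be a real Banach space and let $A\subset X\times X^*$ be maximal self-cancelling (i.e. self-cancelling and not properly contained in any self-cancelling subset of $X\times X^*$). Then $A^\vdash$ or $-A^\vdash$ is maximal monotone, where $-B=\{(x,-x^* )\mid (x,x^* )\in B\}$.
   Context: $\langle x,x^*\rangle=x^*(x)$. $A$ is self-cancelling if it is a linear subspace of $X\times X^*$ with $\langle x,x^*\rangle=0$ for all $(x,x^* )\in A$. $B^\vdash=\{(y,y^* )\mid \langle x,y^*\rangle+\langle y,x^*\rangle=0\ \forall (x,x^* )\in B\}$. A set $T\subset X\times X^*$ is monotone if $\langle x-y,x^*-y^*\rangle\ge0$ for all $(x,x^* ),(y,y^* )\in T$, and maximal monotone if it is monotone and not properly contained in any monotone set. *)

From HB Require Import structures.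
From mathcomp Require Import all_boot all_order all_algebra.
From mathcomp Require Import all_classical all_reals all_analysis.
Set Implicit Arguments. Unset Strict Implicit. Unset Printing Implicit Defensive.
Import Order.TTheory GRing.Theory Num.Theory.
Import numFieldNormedType.Exports.
Local Open Scope classical_set_scope.
Local Open Scope ring_scope.

(* The dual X^* is represented as the continuous linear functionals X -> R;
   an element (x, x^* ) of X x X^* is a pair in X * (X -> R) whose second
   component satisfies [is_dual]. *)

Section Defs.
Variables (R : realType) (X : completeNormedModType R).

Definition is_dual (f : X -> R) : Prop :=
  (forall (a : R) (u v : X), f (a *: u + v) = a * f u + f v) /\ continuous f.

Definition pairT := (X * (X -> R))%type.

Definition in_XXs (B : set pairT) : Prop := forall p, B p -> is_dual p.2.

Definition dpair (x : X) (xs : X -> R) : R := xs x.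

Definition is_subspace (B : set pairT) : Prop :=
  in_XXs B /\ B (0, fun _ => 0) /\
  (forall p q, B p -> B q -> B (p.1 + q.1, fun z => p.2 z + q.2 z)) /\
  (forall (a : R) p, B p -> B (a *: p.1, fun z => a * p.2 z)).

Definition self_cancelling (B : set pairT) : Prop :=
  is_subspace B /\ forall p, B p -> dpair p.1 p.2 = 0.

Definition maximal_self_cancelling (B : set pairT) : Prop :=
  self_cancelling B /\
  forall C, self_cancelling C -> B `<=` C -> C = B.

Definition perp (B : set pairT) : set pairT :=
  [set q | is_dual q.2 /\
     forall p, B p -> dpair p.1 q.2 + dpair q.1 p.2 = 0].

Definition negB (B : set pairT) : set pairT :=
  [set q | exists p, B p /\ q = (p.1, fun z => - p.2 z)].

Definition monotone (T : set pairT) : Prop :=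
  in_XXs T /\
  forall p q, T p -> T q -> 0 <= dpair (p.1 - q.1) (fun z => p.2 z - q.2 z).

Definition maximal_monotone (T : set pairT) : Prop :=
  monotone T /\ forall T', monotone T' -> T `<=` T' -> T' = T.

End Defs.

From Pilot Require Import Defs.
From HB Require Import structures.
From mathcomp Require Import all_boot all_order all_algebra.
From mathcomp Require Import all_classical all_reals all_analysis.
From mathcomp Require Import ring lra.
Import Order.TTheory GRing.Theory Num.Theory.
Import numFieldNormedType.Exports.
Local Open Scope classical_set_scope.
Local Open Scope ring_scope.

(* The quadratic form q(x, x^* ) = <x, x^* > has a constant sign on A^⊢.
   Otherwise pick b, c in A^⊢ with q(b) > 0 > q(c): the quadratic t |-> q(b + t c)
   has two real roots t1, t2, and the isotropic vectors b + t_i c of A^⊢ lie in A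
   by maximality (A + R w is still self-cancelling for isotropic w in A^⊢), so
   their polar form vanishes, contradicting Vieta's formulas.  If q >= 0 on A^⊢
   then A^⊢ is monotone since it is a subspace; and a pair z monotonically related
   to A^⊢ ⊇ A satisfies q(z - l a) >= 0 for all a in A and l in R, an affine
   function of l, which forces z in A^⊢.  The case q <= 0 is the same for -A^⊢. *)

Section MaximalSelfCancelling.
Context {R : realType} {X : completeNormedModType R}.
Implicit Types (f g : X -> R) (A : set (pairT X)) (p q a b c w : pairT X).

Lemma dual0 {f} : is_dual f -> f 0 = 0.
Proof. move=> [lin _]; have := lin 1 0 0; rewrite scaler0 add0r mul1r; lra. Qed.

Lemma dualD {f u v} : is_dual f -> f (u + v) = f u + f v.
Proof. by move=> [lin _]; have := lin 1 u v; rewrite scale1r mul1r. Qed.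

Lemma dualZ {f k u} : is_dual f -> f (k *: u) = k * f u.
Proof. by move=> df; have := (proj1 df) k u 0; rewrite (dual0 df) !addr0. Qed.

Lemma dualB {f u v} : is_dual f -> f (u - v) = f u - f v.
Proof. by move=> df; rewrite dualD // -scaleN1r dualZ // mulN1r. Qed.

Lemma is_dualZ f k : is_dual f -> is_dual (fun z => k * f z).
Proof.
move=> df; split=> [l u v|]; first by rewrite dualD // dualZ //; ring.
move=> x; apply: (@continuousM _ _ (fun=> k) f); first exact: cst_continuous.
exact: (proj2 df).
Qed.

Lemma is_dualDZ f g k : is_dual f -> is_dual g -> is_dual (fun z => f z + k * g z).
Proof.
move=> df dg; split=> [l u v|]; first by rewrite !dualD // !dualZ //; ring.
move=> x; apply: (@continuousD _ _ _ f (fun z => k * g z)); first exact: (proj2 df).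
exact: (proj2 (is_dualZ g k dg) x).
Qed.

Definition qform p : R := Defs.dpair p.1 p.2.

Definition pcomb b c (t : R) : pairT X := (b.1 + t *: c.1, fun z => b.2 z + t * c.2 z).

Lemma qform_pcomb b c t : is_dual b.2 -> is_dual c.2 ->
  qform (pcomb b c t) = qform b + t * (b.2 c.1 + c.2 b.1) + t ^+ 2 * qform c.
Proof. by move=> db dc; rewrite /qform /Defs.dpair /= !dualD // !dualZ //; ring. Qed.

Lemma polar_pcomb b c t u : is_dual b.2 -> is_dual c.2 ->
  (pcomb b c u).2 (pcomb b c t).1 + (pcomb b c t).2 (pcomb b c u).1 =
  2 * qform b + (t + u) * (b.2 c.1 + c.2 b.1) + 2 * t * u * qform c.
Proof. by move=> db dc; rewrite /qform /Defs.dpair /= !dualD // !dualZ //; ring. Qed.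

Lemma self_cancelling_dual {A p} : self_cancelling A -> A p -> is_dual p.2.
Proof. by case=> [[dualA _] _] /dualA. Qed.

Lemma self_cancelling_polar {A p q} : self_cancelling A -> A p -> A q ->
  q.2 p.1 + p.2 q.1 = 0.
Proof.
move=> scA Ap Aq; have [[_ [_ [addA _]]] isoA] := scA.
have dp := self_cancelling_dual scA Ap; have dq := self_cancelling_dual scA Aq.
have := isoA _ (addA _ _ Ap Aq); move: (isoA _ Ap) (isoA _ Aq).
by rewrite /Defs.dpair /= (dualD dp) (dualD dq); lra.
Qed.

Lemma self_cancelling_sub_perp {A} : self_cancelling A -> A `<=` perp A.
Proof.
move=> scA q Aq; split; first exact: self_cancelling_dual scA Aq.
by move=> p Ap; exact: self_cancelling_polar scA Ap Aq.
Qed.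

Lemma perp_pcomb {A b c} t : self_cancelling A -> perp A b -> perp A c ->
  perp A (pcomb b c t).
Proof.
move=> scA [db perpb] [dc perpc]; split; first exact: is_dualDZ.
move=> p Ap; have dp := self_cancelling_dual scA Ap.
move: (perpb _ Ap) (perpc _ Ap); rewrite /Defs.dpair /= dualD // dualZ // => eb ec.
transitivity ((b.2 p.1 + p.2 b.1) + t * (c.2 p.1 + p.2 c.1)); first ring.
by rewrite eb ec mulr0 addr0.
Qed.

Lemma self_cancelling_extend {A w} : self_cancelling A -> perp A w -> qform w = 0 ->
  self_cancelling [set pcomb a w t | a in A & t in [set: R]].
Proof.
move=> scA [dw perpw] qw; have [[dualA [A0 [addA scaleA]]] isoA] := scA.
split; last first.
  move=> _ [a Aa [t _ <-]]; have da := self_cancelling_dual scA Aa.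
  rewrite -[Defs.dpair _ _]/(qform _) qform_pcomb // qw.
  have := perpw _ Aa; rewrite /Defs.dpair addrC => ->.
  by have := isoA _ Aa; rewrite /qform /Defs.dpair => ->; ring.
split; [|split; [|split]].
- by move=> _ [a Aa [t _ <-]]; exact: is_dualDZ (dualA _ Aa) dw.
- exists (0, fun _ => 0) => //; exists 0 => //; rewrite /pcomb /= scale0r addr0.
  by congr (_, _); apply: funext => z; rewrite mul0r addr0.
- move=> _ _ [a Aa [t _ <-]] [b Ab [u _ <-]].
  exists (a.1 + b.1, fun z => a.2 z + b.2 z); first exact: addA.
  exists (t + u) => //; rewrite /pcomb /= scalerDl addrACA.
  by congr (_, _); apply: funext => z; ring.
- move=> k _ [a Aa [t _ <-]].
  exists (k *: a.1, fun z => k * a.2 z); first exact: scaleA.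
  exists (k * t) => //; rewrite /pcomb /= scalerDr scalerA.
  by congr (_, _); apply: funext => z; ring.
Qed.

Lemma maximal_self_cancelling_isotropic A w : maximal_self_cancelling A ->
  perp A w -> qform w = 0 -> A w.
Proof.
move=> [scA maxA] perpw qw.
have subA : A `<=` [set pcomb a w t | a in A & t in [set: R]].
  move=> a Aa; exists a => //; exists 0 => //; rewrite /pcomb scale0r addr0.
  by case: a Aa => a1 a2 _ /=; congr (_, _); apply: funext => z; rewrite mul0r addr0.
rewrite -(maxA _ (self_cancelling_extend scA perpw qw) subA).
exists (0, fun _ => 0); first by case: scA => [[_ []]].
exists 1 => //; rewrite /pcomb /= scale1r add0r.
case: w {perpw qw subA} => w1 w2 /=; congr (_, _).
by apply: funext => z; rewrite mul1r add0r.
Qed.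

Lemma quadratic_roots_polar_neq0 {be ga : R} (k : R) : 0 < be -> ga < 0 ->
  exists t1 t2, [/\ be + t1 * k + t1 ^+ 2 * ga = 0, be + t2 * k + t2 ^+ 2 * ga = 0
                  & 2 * be + (t1 + t2) * k + 2 * t1 * t2 * ga != 0].
Proof.
move=> be_gt0 ga_lt0; have ga_neq0 : ga != 0 by rewrite lt_eqF.
pose D := k ^+ 2 - 4 * ga * be.
have /sqr_sqrtr : 0 <= D by rewrite /D; nra.
set s := Num.sqrt D => sD.
have root t : 2 * ga * t + k = s \/ 2 * ga * t + k = - s ->
    be + t * k + t ^+ 2 * ga = 0.
  move=> ht; have -> : be + t * k + t ^+ 2 * ga = ((2 * ga * t + k) ^+ 2 - D) / (4 * ga).
    by rewrite /D; field; lra.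
  by case: ht => ->; rewrite ?sqrrN sD subrr mul0r.
exists ((- k + s) / (2 * ga)), ((- k - s) / (2 * ga)); split.
- by apply: root; left; field.
- by apply: root; right; field.
(* Vieta: t1 + t2 = - k / ga and t1 t2 = be / ga. *)
have -> : 2 * be + ((- k + s) / (2 * ga) + (- k - s) / (2 * ga)) * k +
    2 * ((- k + s) / (2 * ga)) * ((- k - s) / (2 * ga)) * ga =
    (4 * ga * be - k ^+ 2 - s ^+ 2) / (2 * ga) by field; lra.
by rewrite sD /D mulf_neq0 ?invr_eq0 ?mulf_neq0 //; nra.
Qed.

Lemma perp_qform_sign {A} : maximal_self_cancelling A ->
  (forall p, perp A p -> 0 <= qform p) \/ (forall p, perp A p -> qform p <= 0).
Proof.
move=> msc; have scA := msc.1.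
have [|not_ge0] := pselect (forall p, perp A p -> 0 <= qform p); [by left | right].
move=> b perpb; rewrite leNgt; apply/negP => qb_gt0.
apply: not_ge0 => c perpc; rewrite leNgt; apply/negP => qc_lt0.
have [db dc] := (proj1 perpb, proj1 perpc).
have [t1 [t2 [r1 r2]]] := quadratic_roots_polar_neq0 (b.2 c.1 + c.2 b.1) qb_gt0 qc_lt0.
have isotropic t : qform b + t * (b.2 c.1 + c.2 b.1) + t ^+ 2 * qform c = 0 ->
    A (pcomb b c t).
  move=> rt; apply: maximal_self_cancelling_isotropic => //; first exact: perp_pcomb.
  by rewrite qform_pcomb // -rt mulrC.
have := self_cancelling_polar scA (isotropic _ r1) (isotropic _ r2).
by rewrite polar_pcomb // => ->; rewrite eqxx.
Qed.

Definition dual_scale (s : R) (B : set (pairT X)) : set (pairT X) :=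
  [set q | exists2 p, B p & q = (p.1, fun z => s * p.2 z)].

Lemma affine_ge0_slope0 (c m : R) : (forall l, 0 <= c - l * m) -> m = 0.
Proof.
move=> ge0; apply/eqP; apply: contraT => m_neq0.
by have := ge0 ((c + 1) / m); rewrite divfK //; lra.
Qed.

Section SignedPerp.
Context {A : set (pairT X)} {s : R}.
Hypotheses (scA : self_cancelling A) (s_sign : s * s = 1).
Hypothesis qform_perp : forall p, perp A p -> 0 <= s * qform p.

Lemma dual_scale_perp_monotone : Defs.monotone (dual_scale s (perp A)).
Proof.
split=> [_ [p perpp ->]|_ _ [p perpp ->] [p' perpp' ->]].
  exact: is_dualZ (proj1 perpp).
have := qform_perp _ (perp_pcomb (-1) scA perpp perpp').
rewrite /qform /Defs.dpair /= scaleN1r.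
by congr (_ <= _); ring.
Qed.

Lemma monotone_related_perp (z : pairT X) : is_dual z.2 ->
  (forall q, dual_scale s (perp A) q ->
     0 <= Defs.dpair (z.1 - q.1) (fun x => z.2 x - q.2 x)) ->
  perp A (z.1, fun x => s * z.2 x).
Proof.
move=> dz related; have [[_ [_ [_ scaleA]]] isoA] := scA.
split; first exact: is_dualZ.
move=> a Aa; have da := self_cancelling_dual scA Aa; rewrite /Defs.dpair /=.
suff polar0 : z.2 a.1 + s * a.2 z.1 = 0.
  by rewrite -[a.2 z.1]mul1r -s_sign -mulrA -mulrDr polar0 mulr0.
apply: (@affine_ge0_slope0 (qform z)) => l.
have Ala : dual_scale s (perp A) (l *: a.1, fun x => s * (l * a.2 x)).
  by exists (l *: a.1, fun x => l * a.2 x); first exact/self_cancelling_sub_perp/scaleA.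
have := related _ Ala; rewrite /Defs.dpair /= !dualB // !dualZ //.
have := isoA _ Aa; rewrite /Defs.dpair => qa.
suff -> : qform z - l * (z.2 a.1 + s * a.2 z.1) =
    z.2 z.1 - l * z.2 a.1 - s * (l * (a.2 z.1 - l * a.2 a.1)) by [].
rewrite /qform /Defs.dpair -[LHS]addr0 -(mulr0 (s * l ^+ 2)) -qa; ring.
Qed.

Lemma dual_scale_perp_maximal_monotone : maximal_monotone (dual_scale s (perp A)).
Proof.
split=> [|T [dualT monoT] subT]; first exact: dual_scale_perp_monotone.
apply/seteqP; split=> // z Tz.
exists (z.1, fun x => s * z.2 x).
  by apply: monotone_related_perp (dualT _ Tz) _ => q /subT; exact: monoT.
case: z {Tz} => z1 z2 /=; congr (_, _).
by apply: funext => x; rewrite mulrA s_sign mul1r.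
Qed.

End SignedPerp.

Lemma dual_scale1 B : dual_scale 1 B = B.
Proof.
apply/seteqP; split=> [_ [p Bp ->]|q Bq].
  by case: p Bp => p1 p2 /=; under eq_fun do rewrite mul1r.
by exists q => //; case: q {Bq} => q1 q2 /=; under eq_fun do rewrite mul1r.
Qed.

Lemma dual_scaleN1 B : dual_scale (-1) B = negB B.
Proof.
apply/seteqP; split=> [_ [p Bp ->]|_ [p [Bp ->]]].
  by exists p; split=> //; congr (_, _); apply: funext => z; rewrite mulN1r.
by exists p => //; congr (_, _); apply: funext => z; rewrite mulN1r.
Qed.

End MaximalSelfCancelling.

Theorem lemma6 (R : realType) (X : completeNormedModType R)
  (A : set (pairT X)) :
  maximal_self_cancelling A ->
  maximal_monotone (perp A) \/ maximal_monotone (negB (perp A)).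
Proof.
move=> msc; have [qform_ge0|qform_le0] := perp_qform_sign msc; [left | right].
- rewrite -[perp A]dual_scale1; apply: dual_scale_perp_maximal_monotone msc.1 _ _.
    by rewrite mul1r.
  by move=> p /qform_ge0; rewrite mul1r.
- rewrite -dual_scaleN1; apply: dual_scale_perp_maximal_monotone msc.1 _ _.
    by rewrite mulN1r opprK.
  by move=> p /qform_le0; rewrite mulN1r oppr_ge0.
Qed.
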